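(* Let $I=(N,O,\succsim)$ be a general instance, $p$ a generalized random matching and $p'$ its associated random matching for the associated instance $I'$. Then $p$ is fractionally weakly stable if and only if $p'$ is fractionally weakly stable and $p$ is non-wasteful (i.e., $p'$ respects non-wastefulness).
   Context: General instance: $N=\{1,\dots,n\}$ agents, $O=\{o_1,\dots,o_m\}$ objects ($m,n\ge1$ arbitrary), $\emptyset$ the null object; each agent $i$ has a weak order $\succsim_i$ over $O\cup\{\emptyset\}$, each object $o$ a weak order $\succsim_o$ over $N\cup\{\emptyset\}$, with either $o\succ_i\emptyset$ or $\emptyset\succ_i o$, and either $i\succ_o\emptyset$ or $\emptyset\succ_o i$. $(i,o)$ is acceptable if $o\succ_i\emptyset$ and $i\succ_o\emptyset$. A generalized random matching is an $n\times m$ nonnegative matrix with row and column sums $\le1$; write $p(\emptyset,o)=1-\sum_{i\in N}p(i,o)$. $p$ is individually rational if $p(i,o)=0$ whenever $\emptyset\succ_i o$ or $\emptyset\succ_o i$; non-wasteful if there is no acceptable $(i,o)$ with $\sum_{o':o'\succsim_i o}p(i,o')<1$ and $\sum_j p(j,o)<1$. $p$ is fractionally weakly stable if it is individually rational, non-wasteful, and for every acceptable pair $(i,o)$: $\sum_{o'\in O:o'\succsim_i o,\,o'\ne o}p(i,o')\ge\sum_{j\in N:i\succ_o j}p(j,o)+p(\emptyset,o)$. Associated instance: $D=\{d_1,\dots,d_m\}$, $\Phi=\{\phi_1,\dots,\phi_n\}$, $N'=N\cup D$, $O'=O\cup\Phi$, with weak orders (blocks best to worst, consecutive blocks strict): $i\in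 N$: objects acceptable to $i$ by $\succsim_i$, $\phi_i$, $\phi_k$ ($k\ne i$) in increasing index, objects unacceptable to $i$ by $\succsim_i$; $o_j$: agents acceptable to $o_j$ by $\succsim_{o_j}$, $d_j$, $d_k$ ($k\ne j$) in increasing index, agents unacceptable to $o_j$ by $\succsim_{o_j}$; $d_j$: $o_j$, other objects of $O$ in increasing index, then null objects with $\phi_k\succsim'_{d_j}\phi_l$ iff $k\succsim_{o_j}l$; $\phi_i$: $i$, other agents of $N$ in increasing index, then dummies with $d_k\succsim'_{\phi_i}d_l$ iff $o_k\succsim_i o_l$. Associated random matching: $p'(i,o_j)=p(i,o_j)$, $p'(d_j,\phi_i)=p(i,o_j)$, $p'(i,\phi_i)=1-\sum_o p(i,o)$, $p'(d_j,o_j)=1-\sum_i p(i,o_j)$, other entries $0$ (an $(n+m)\times(n+m)$ bistochastic matrix). A bistochastic matrix $q$ on $N'\times O'$ is fractionally weakly stable if for every $(a,c)\in N'\times O'$: $\sum_{c':c'\succsim'_a c,\,c'\ne c}q(a,c')\ge\sum_{b:a\succ'_c b}q(b,c)$. *)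

From mathcomp Require Import all_boot all_order all_algebra.
Set Implicit Arguments. Unset Strict Implicit. Unset Printing Implicit Defensive.
Import Order.TTheory GRing.Theory Num.Theory.
Local Open Scope ring_scope.

(* Agents are 'I_n, objects are 'I_m; the null object/agent is None.   *)
(* apref i : rel (option 'I_m)   is  ≿_i  (x ≿_i y  iff apref i x y)    *)

Definition weak_order (T : Type) (r : rel T) : Prop :=
  (forall x y, r x y || r y x) /\ (forall x y z, r x y -> r y z -> r x z).

Definition sprefer (T : Type) (r : rel T) (x y : T) : bool := r x y && ~~ r y x.

Definition general_instance (n m : nat)
  (apref : 'I_n -> rel (option 'I_m)) (opref : 'I_m -> rel (option 'I_n)) : Prop :=
  (forall i, weak_order (apref i)) /\ (forall o, weak_order (opref o)) /\
  (forall i o, sprefer (apref i) (Some o) None \/ sprefer (apref i) None (Some o)) /\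
  (forall o i, sprefer (opref o) (Some i) None \/ sprefer (opref o) None (Some i)).

Section General.
Variables (R : realFieldType) (n m : nat).
Variables (apref : 'I_n -> rel (option 'I_m)) (opref : 'I_m -> rel (option 'I_n)).

Definition gen_random_matching (p : 'M[R]_(n, m)) : Prop :=
  (forall i o, 0 <= p i o) /\
  (forall i, \sum_(o < m) p i o <= 1) /\
  (forall o, \sum_(i < n) p i o <= 1).

Definition p_null (p : 'M[R]_(n, m)) (o : 'I_m) : R := 1 - \sum_(i < n) p i o.

Definition acceptable (i : 'I_n) (o : 'I_m) : bool :=
  sprefer (apref i) (Some o) None && sprefer (opref o) (Some i) None.

Definition individually_rational (p : 'M[R]_(n, m)) : Prop :=
  forall i o, sprefer (apref i) None (Some o) || sprefer (opref o) None (Some i) ->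
    p i o = 0.

Definition non_wasteful (p : 'M[R]_(n, m)) : Prop :=
  ~ exists i o, [/\ acceptable i o,
      \sum_(o' < m | apref i (Some o') (Some o)) p i o' < 1 &
      \sum_(j < n) p j o < 1].

Definition fract_weakly_stable (p : 'M[R]_(n, m)) : Prop :=
  [/\ individually_rational p, non_wasteful p &
    forall i o, acceptable i o ->
      \sum_(o' < m | apref i (Some o') (Some o) && (o' != o)) p i o'
        >= \sum_(j < n | sprefer (opref o) (Some i) (Some j)) p j o + p_null p o].

(* N' = N ∪ D  is  'I_n + 'I_m  (inl i = agent i, inr j = dummy d_j);  *)
(* O' = O ∪ Φ  is  'I_m + 'I_n  (inl j = object o_j, inr i = φ_i).     *)

Definition agentN' := ('I_n + 'I_m)%type.
Definition objectO' := ('I_m + 'I_n)%type.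

(* order given by blocks (lower block = better, consecutive blocks strict)
   and a within-block weak order *)
Definition block_le (X : Type) (bk : X -> nat) (within : rel X) : rel X :=
  fun x y => (bk x < bk y)%N || ((bk x == bk y) && within x y).

Definition agent_block (a : agentN') (c : objectO') : nat :=
  match a, c with
  | inl i, inl o => if sprefer (apref i) (Some o) None then 0%N else 3%N
  | inl i, inr k => if k == i then 1%N else 2%N
  | inr j, inl o => if o == j then 0%N else 1%N
  | inr j, inr k => 2%N
  end.

Definition agent_within (a : agentN') : rel objectO' :=
  fun c c' =>
  match a, c, c' with
  | inl i, inl o, inl o' => apref i (Some o) (Some o')
  | inl i, inr k, inr k' => (k <= k')%N
  | inr j, inl o, inl o' => (o <= o')%N
  | inr j, inr k, inr k' => opref j (Some k) (Some k')
  | _, _, _ => true  (* never used: different kinds lie in different blocks *)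
  end.

Definition agent_pref' (a : agentN') : rel objectO' :=
  block_le (agent_block a) (agent_within a).

Definition object_block (c : objectO') (a : agentN') : nat :=
  match c, a with
  | inl j, inl i => if sprefer (opref j) (Some i) None then 0%N else 3%N
  | inl j, inr k => if k == j then 1%N else 2%N
  | inr i, inl k => if k == i then 0%N else 1%N
  | inr i, inr k => 2%N
  end.

Definition object_within (c : objectO') : rel agentN' :=
  fun a a' =>
  match c, a, a' with
  | inl j, inl i, inl i' => opref j (Some i) (Some i')
  | inl j, inr k, inr k' => (k <= k')%N
  | inr i, inl k, inl k' => (k <= k')%N
  | inr i, inr k, inr k' => apref i (Some k) (Some k')
  | _, _, _ => true
  end.

Definition object_pref' (c : objectO') : rel agentN' :=
  block_le (object_block c) (object_within c).

Definition assoc_matching (p : 'M[R]_(n, m)) (a : agentN') (c : objectO') : R :=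
  match a, c with
  | inl i, inl j => p i j
  | inr j, inr i => p i j
  | inl i, inr k => if k == i then 1 - \sum_(o < m) p i o else 0
  | inr j, inl k => if k == j then 1 - \sum_(i < n) p i j else 0
  end.

Definition bistochastic (q : agentN' -> objectO' -> R) : Prop :=
  (forall a c, 0 <= q a c) /\
  (forall a, \sum_(c : objectO') q a c = 1) /\
  (forall c, \sum_(a : agentN') q a c = 1).

Definition fws_assoc (q : agentN' -> objectO' -> R) : Prop :=
  bistochastic q /\
  forall (a : agentN') (c : objectO'),
    \sum_(c' : objectO' | agent_pref' a c' c && (c' != c)) q a c'
      >= \sum_(b : agentN' | sprefer (object_pref' c) a b) q b c.

End General.

From mathcomp Require Import all_boot all_order all_algebra.
From mathcomp Require Import lra.
Import Order.TTheory GRing.Theory Num.Theory.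
Local Open Scope ring_scope.
Set Implicit Arguments. Unset Strict Implicit. Unset Printing Implicit Defensive.

(* Write [mass_above q a c] for the mass that a in N' puts on objects it ranks
   above c and [mass_below q a c] for the mass that c in O' receives from agents
   it ranks below a; p' is fractionally weakly stable iff the latter is at most
   the former at every pair.  At an acceptable pair (i, o_j) this is the
   stability inequality of p at (i, o_j).  At (i, phi_i) and (d_j, o_j) it says
   that p puts no mass on pairs unacceptable to i, resp. to o_j, so these pairs
   encode individual rationality.  At (d_j, phi_i) it follows from the
   inequality at (i, o_j) once row i is split around o_j and column o_j around
   i.  At every other pair it is trivial for an individually rational p: either
   all mass of the agent lies in blocks strictly above c, or every agent below a
   in the ranking of c carries no mass.  Non-wastefulness is invisible in p' and
   must be assumed separately. *)

Section WeakOrder.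
Variables (T : Type) (r : rel T).
Hypothesis r_wo : weak_order r.

Lemma weak_order_refl x : r x x.
Proof. by case: r_wo => total _; have := total x x; rewrite orbb. Qed.

Lemma weak_order_trans x y z : r x y -> r y z -> r x z.
Proof. by case: r_wo => _; apply. Qed.

Lemma sprefer_negle x y : ~~ r x y -> sprefer r y x.
Proof.
case: r_wo => total _ nxy; rewrite /sprefer nxy andbT.
by have := total x y; rewrite (negbTE nxy).
Qed.

Lemma sprefer_trans x y z : sprefer r x y -> sprefer r y z -> sprefer r x z.
Proof.
case/andP=> xy nyx /andP[yz nzy]; rewrite /sprefer (weak_order_trans xy yz) /=.
by apply: contra nyx; apply: weak_order_trans yz.
Qed.

Lemma sprefer_le_trans x y z : r x y -> sprefer r y z -> sprefer r x z.
Proof.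
move=> xy /andP[yz nzy]; rewrite /sprefer (weak_order_trans xy yz) /=.
by apply: contra nzy => zx; apply: weak_order_trans zx xy.
Qed.

End WeakOrder.

Lemma sprefer_asym (T : Type) (r : rel T) x y : sprefer r x y -> ~~ sprefer r y x.
Proof. by case/andP=> xy _; rewrite /sprefer xy andbF. Qed.

Lemma sum_weak_order_split (R : numDomainType) (I : finType) (r : rel (option I))
    (F : I -> R) y :
  weak_order r ->
  \sum_x F x = \sum_(x | r (Some x) (Some y) && (x != y)) F x + F y
               + \sum_(x | sprefer r (Some y) (Some x)) F x.
Proof.
move=> r_wo; rewrite (bigID (fun x => r (Some x) (Some y))) /=.
rewrite (bigD1 y) ?weak_order_refl //= [F y + _]addrC.
congr (_ + _); apply: eq_bigl => x.
by apply/idP/idP => [/(sprefer_negle r_wo)|/andP[]].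
Qed.

Section BlockOrder.
Variables (X : eqType) (bk : X -> nat) (w : rel X).

Lemma block_lt_le x y : (bk x < bk y)%N -> block_le bk w x y && (x != y).
Proof.
by move=> lt_xy; rewrite /block_le lt_xy; apply: contraTneq lt_xy => ->; rewrite ltnn.
Qed.

Lemma sprefer_block_leq x y : sprefer (block_le bk w) x y -> (bk x <= bk y)%N.
Proof. by case/andP=> _; rewrite /block_le negb_or => /andP[]; rewrite -leqNgt. Qed.

End BlockOrder.

Lemma psumr_le0P (R : numDomainType) (I : finType) (P : pred I) (F : I -> R) :
  (forall i, P i -> 0 <= F i) -> \sum_(i | P i) F i <= 0 -> forall i, P i -> F i = 0.
Proof.
by move=> F_ge0 le0; apply: psumr_eq0P => //; apply/eqP; rewrite eq_le le0 sumr_ge0.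
Qed.

Section AssociatedInstance.
Variables (R : realFieldType) (n m : nat).
Variables (apref : 'I_n -> rel (option 'I_m)) (opref : 'I_m -> rel (option 'I_n)).

Definition mass_above (q : agentN' n m -> objectO' n m -> R) a c : R :=
  \sum_(c' | agent_pref' apref opref a c' c && (c' != c)) q a c'.

Definition mass_below (q : agentN' n m -> objectO' n m -> R) a c : R :=
  \sum_(b | sprefer (object_pref' apref opref c) a b) q b c.

Definition fws_at (p : 'M[R]_(n, m)) i o : bool :=
  \sum_(j | sprefer (opref o) (Some i) (Some j)) p j o + p_null p o
    <= \sum_(o' | apref i (Some o') (Some o) && (o' != o)) p i o'.

Lemma mass_above_full q a c : bistochastic q ->
    (forall c', (agent_block apref a c <= agent_block apref a c')%N -> q a c' = 0) ->
  mass_above q a c = 1.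
Proof.
case=> _ [row1 _] low0; rewrite -(row1 a).
rewrite [RHS](bigID (fun c' => agent_pref' apref opref a c' c && (c' != c))) /=.
rewrite [X in _ = _ + X]big1 ?addr0 // => c' not_above; apply: low0.
by rewrite leqNgt; apply: contra not_above; apply: block_lt_le.
Qed.

Lemma mass_below_le1 q a c : bistochastic q -> mass_below q a c <= 1.
Proof.
case=> q_ge0 [_ col1]; rewrite -(col1 c).
rewrite [leRHS](bigID (sprefer (object_pref' apref opref c) a)) /=.
by rewrite lerDl; apply: sumr_ge0 => b _; apply: q_ge0.
Qed.

Variable p : 'M[R]_(n, m).
Hypothesis inst_wf : general_instance apref opref.
Hypothesis p_matching : gen_random_matching p.

Local Notation q := (assoc_matching p).
Local Notation accepts_object i o := (sprefer (apref i) (Some o) None).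
Local Notation accepts_agent o i := (sprefer (opref o) (Some i) None).

Lemma apref_wo i : weak_order (apref i).
Proof. by case: inst_wf. Qed.

Lemma opref_wo o : weak_order (opref o).
Proof. by case: inst_wf => _ []. Qed.

Lemma agent_rejects i o : ~~ accepts_object i o -> sprefer (apref i) None (Some o).
Proof. by case: inst_wf => _ [_ [/(_ i o) [-> | ->] _]]. Qed.

Lemma object_rejects o i : ~~ accepts_agent o i -> sprefer (opref o) None (Some i).
Proof. by case: inst_wf => _ [_ [_ /(_ o i) [-> | ->]]]. Qed.

Lemma individually_rationalP :
  individually_rational apref opref p <->
  forall i o, ~~ acceptable apref opref i o -> p i o = 0.
Proof.
split=> ir i o reject; apply: ir.
- by case/nandP: reject => [/agent_rejects|/object_rejects] ->; rewrite ?orbT.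
- apply/nandP; case/orP: reject => rejected; [left | right].
  all: exact: sprefer_asym rejected.
Qed.

Lemma p_ge0 i o : 0 <= p i o.
Proof. by case: p_matching. Qed.

Lemma p_row_le1 i : \sum_o p i o <= 1.
Proof. by case: p_matching => _ []. Qed.

Lemma p_col_le1 o : \sum_i p i o <= 1.
Proof. by case: p_matching => _ []. Qed.

Lemma assoc_matching_ge0 a c : 0 <= q a c.
Proof.
case: a c => [i|j] [k|k] /=; rewrite ?p_ge0 //;
  by case: eqP; rewrite ?subr_ge0 ?p_row_le1 ?p_col_le1.
Qed.

Lemma assoc_matching_bistochastic : bistochastic q.
Proof.
split; first exact: assoc_matching_ge0.
split=> [[i|j]|[j|i]]; rewrite big_sumType /= -big_mkcond /=.
1,2: by rewrite big_pred1_eq; lra.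
- rewrite (big_pred1 j) => [|k]; [lra | exact: eq_sym].
- rewrite (big_pred1 i) => [|k]; [lra | exact: eq_sym].
Qed.

Lemma mass_above_agent_object i o : accepts_object i o ->
  mass_above q (inl i) (inl o) =
  \sum_(o' | apref i (Some o') (Some o) && (o' != o)) p i o'.
Proof.
move=> acc_o; rewrite /mass_above big_sumType /=.
rewrite [X in _ + X]big_pred0 ?addr0; last first.
  by move=> k; rewrite /agent_pref' /block_le /= acc_o; case: (k == i).
apply: eq_bigl => o'; rewrite /agent_pref' /block_le /= (inj_eq inl_inj) acc_o.
case: ifP => //= rej_o'; apply/esym/negbTE; apply: contraFN rej_o' => /andP[o'_o _].
exact: (sprefer_le_trans (apref_wo i) o'_o acc_o).
Qed.

Lemma mass_below_agent_object i o : accepts_agent o i ->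
  mass_below q (inl i) (inl o) =
  \sum_(j | sprefer (opref o) (Some i) (Some j)) p j o + p_null p o.
Proof.
move=> acc_i; rewrite /mass_below big_sumType /=; congr (_ + _).
- apply: eq_bigl => k; rewrite {1}/sprefer /object_pref' /block_le /= acc_i.
  case: ifP => // /negbT /object_rejects rej_k.
  by rewrite (sprefer_trans (opref_wo o) acc_i rej_k).
- rewrite (eq_bigl xpredT) => [|k]; last first.
    by rewrite /object_pref' /sprefer /block_le /= acc_i; case: eqP.
  by rewrite -big_mkcond (big_pred1 o) // => k; apply: eq_sym.
Qed.

Lemma assoc_stable_acceptableE i o : acceptable apref opref i o ->
  (mass_below q (inl i) (inl o) <= mass_above q (inl i) (inl o)) = fws_at p i o.
Proof.
by case/andP=> acc_o acc_i; rewrite mass_above_agent_object // mass_below_agent_object.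
Qed.

Lemma mass_above_agent_own_null i :
  mass_above q (inl i) (inr i) = \sum_(o | accepts_object i o) p i o.
Proof.
rewrite /mass_above big_sumType /= [X in _ + X]big_pred0 ?addr0 => [|k].
  by apply: eq_bigl => o; rewrite /agent_pref' /block_le /= eqxx; case: ifP.
by rewrite /agent_pref' /block_le /= eqxx; case: eqP => [->|]; rewrite ?eqxx ?andbF.
Qed.

Lemma mass_below_agent_own_null i : mass_below q (inl i) (inr i) = \sum_o p i o.
Proof.
rewrite /mass_below big_sumType /= big1 ?add0r => [|k].
  by apply: eq_bigl => j; rewrite /object_pref' /sprefer /block_le /= eqxx.
rewrite /object_pref' /sprefer /block_le /= eqxx.
by case: (eqVneq k i) => [->|k_i]; rewrite ?leqnn // eq_sym (negbTE k_i).
Qed.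

Lemma mass_above_dummy_own_object o : mass_above q (inr o) (inl o) = 0.
Proof.
rewrite /mass_above big_sumType /= !big_pred0 ?addr0 // => k.
  by rewrite /agent_pref' /block_le /= eqxx.
by rewrite /agent_pref' /block_le /= eqxx; case: eqP => [->|]; rewrite ?eqxx ?andbF.
Qed.

Lemma mass_below_dummy_own_object o :
  mass_below q (inr o) (inl o) = \sum_(i | ~~ accepts_agent o i) p i o.
Proof.
rewrite /mass_below big_sumType /= [X in _ + X]big1 ?addr0 => [|k].
  by apply: eq_bigl => i; rewrite {1}/sprefer /object_pref' /block_le /= eqxx; case: ifP.
rewrite /object_pref' /sprefer /block_le /=.
by case: (eqVneq k o) => [->|k_o]; rewrite ?eqxx ?leqnn // eq_sym (negbTE k_o).
Qed.

Lemma individually_rational_own_pairsP :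
  individually_rational apref opref p <->
  (forall i, mass_below q (inl i) (inr i) <= mass_above q (inl i) (inr i)) /\
  (forall o, mass_below q (inr o) (inl o) <= mass_above q (inr o) (inl o)).
Proof.
have row_split i : \sum_o p i o =
    \sum_(o | accepts_object i o) p i o + \sum_(o | ~~ accepts_object i o) p i o.
  exact: bigID.
rewrite individually_rationalP; split=> [ir | [row col] i o].
- split=> [i | o].
  + rewrite mass_above_agent_own_null mass_below_agent_own_null row_split.
    rewrite [X in _ + X]big1 ?addr0 // => o rej.
    by apply: ir; rewrite /acceptable (negbTE rej).
  + rewrite mass_above_dummy_own_object mass_below_dummy_own_object big1 // => i rej.
    by apply: ir; rewrite /acceptable (negbTE rej) andbF.
- case/nandP=> rej.
  + apply: (psumr_le0P (P := fun o => ~~ accepts_object i o)) => // [o' _|].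
      exact: p_ge0.
    have := row i; rewrite mass_above_agent_own_null mass_below_agent_own_null.
    by rewrite row_split gerDl.
  + apply: (psumr_le0P (P := fun i => ~~ accepts_agent o i) (F := p^~ o)) => // [j _|].
      exact: p_ge0.
    by have := col o; rewrite mass_above_dummy_own_object mass_below_dummy_own_object.
Qed.

Lemma mass_above_dummy_null j i : mass_above q (inr j) (inr i) =
  p_null p j + \sum_(k | opref j (Some k) (Some i) && (k != i)) p k j.
Proof.
rewrite /mass_above big_sumType /=; congr (_ + _).
rewrite (eq_bigl xpredT) => [|k]; first by rewrite -big_mkcond big_pred1_eq.
by rewrite /agent_pref' /block_le /=; case: eqP.
Qed.

Lemma mass_below_dummy_null j i : mass_below q (inr j) (inr i) =
  \sum_(k | sprefer (apref i) (Some j) (Some k)) p i k.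
Proof.
rewrite /mass_below big_sumType /= big_pred0 ?add0r => [|k].
  by apply: eq_bigl => k; rewrite {1}/sprefer /object_pref' /block_le /=.
by rewrite /object_pref' /sprefer /block_le /=; case: eqP.
Qed.

Section IndividuallyRational.
Hypothesis p_ir : individually_rational apref opref p.

Lemma p_unacceptable_eq0 i o : ~~ acceptable apref opref i o -> p i o = 0.
Proof. exact: individually_rationalP.1 p_ir i o. Qed.

Lemma assoc_row_low_block i c :
  (2 <= agent_block apref (inl i) c)%N -> q (inl i) c = 0.
Proof.
case: c => [o|k] /=; last by case: eqP.
by case: ifP => // rej _; apply: p_unacceptable_eq0; rewrite /acceptable rej.
Qed.

Lemma assoc_col_low_block o b :
  (2 <= object_block opref (inl o) b)%N -> q b (inl o) = 0.
Proof.
case: b => [i|k] /=.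
  by case: ifP => // rej _; apply: p_unacceptable_eq0; rewrite /acceptable rej andbF.
by case: (eqVneq k o) => [->|k_o] //; rewrite eq_sym (negbTE k_o).
Qed.

Lemma mass_above_agent_low i c :
  (2 <= agent_block apref (inl i) c)%N -> mass_above q (inl i) c = 1.
Proof.
move=> low; apply: mass_above_full assoc_matching_bistochastic _ => c' le_c'.
exact/assoc_row_low_block/(leq_trans low le_c').
Qed.

Lemma mass_below_object_low o a :
  (2 <= object_block opref (inl o) a)%N -> mass_below q a (inl o) = 0.
Proof.
move=> low; apply: big1 => b /sprefer_block_leq le_b.
exact/assoc_col_low_block/(leq_trans low le_b).
Qed.

Lemma p_below_rejected_object i o k : ~~ accepts_object i o ->
  sprefer (apref i) (Some o) (Some k) -> p i k = 0.
Proof.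
move=> /agent_rejects rej_o below_o; apply: p_unacceptable_eq0; apply/nandP; left.
exact/sprefer_asym/(sprefer_trans (apref_wo i) rej_o below_o).
Qed.

Lemma p_below_rejected_agent o i k : ~~ accepts_agent o i ->
  sprefer (opref o) (Some i) (Some k) -> p k o = 0.
Proof.
move=> /object_rejects rej_i below_i; apply: p_unacceptable_eq0; apply/nandP; right.
exact/sprefer_asym/(sprefer_trans (opref_wo o) rej_i below_i).
Qed.

Lemma assoc_stable_dummy_null j i : (acceptable apref opref i j -> fws_at p i j) ->
  mass_below q (inr j) (inr i) <= mass_above q (inr j) (inr i).
Proof.
move=> stab_ij; rewrite mass_above_dummy_null mass_below_dummy_null /p_null.
have row := sum_weak_order_split (p i) j (apref_wo i).
have col := sum_weak_order_split (p^~ j) i (opref_wo j).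
have row_le1 := p_row_le1 i; have col_le1 := p_col_le1 j.
have row_ge0 (P : pred 'I_m) : 0 <= \sum_(o | P o) p i o.
  by apply: sumr_ge0 => o _; apply: p_ge0.
have col_ge0 (P : pred 'I_n) : 0 <= \sum_(k | P k) p k j.
  by apply: sumr_ge0 => k _; apply: p_ge0.
have above_j_ge0 := row_ge0 (fun o => apref i (Some o) (Some j) && (o != j)).
have above_i_ge0 := col_ge0 (fun k => opref j (Some k) (Some i) && (k != i)).
have below_i_ge0 := col_ge0 (fun k => sprefer (opref j) (Some i) (Some k)).
have [acc_j | rej_j] := boolP (accepts_object i j); last first.
  by rewrite big1 => [|k]; [lra | apply: p_below_rejected_object].
have [acc_i | rej_i] := boolP (accepts_agent j i); last first.
  have below_i0 : \sum_(k | sprefer (opref j) (Some i) (Some k)) p k j = 0.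
    by apply: big1 => k; apply: p_below_rejected_agent.
  have pij0 : p i j = 0.
    by apply: p_unacceptable_eq0; rewrite /acceptable (negbTE rej_i) andbF.
  lra.
have := stab_ij; rewrite /acceptable acc_j acc_i /fws_at /p_null => /(_ isT).
lra.
Qed.

Lemma assoc_stable_of_fws : (forall i o, acceptable apref opref i o -> fws_at p i o) ->
  forall a c, mass_below q a c <= mass_above q a c.
Proof.
move=> stab; have [own_null own_object] := individually_rational_own_pairsP.1 p_ir.
have below_le1 a c := mass_below_le1 a c assoc_matching_bistochastic.
have above_ge0 a c : 0 <= mass_above q a c.
  by apply: sumr_ge0 => c' _; apply: assoc_matching_ge0.
case=> [i|j] [o|k].
- have [ok | /nandP[rej|rej]] := boolP (acceptable apref opref i o).
  + by rewrite assoc_stable_acceptableE // stab.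
  + by rewrite mass_above_agent_low //= (negbTE rej).
  + by rewrite mass_below_object_low //= (negbTE rej).
- have [->|k_i] := eqVneq k i; first exact: own_null.
  by rewrite mass_above_agent_low //= (negbTE k_i).
- have [->|j_o] := eqVneq j o; first exact: own_object.
  by rewrite mass_below_object_low //= (negbTE j_o).
- exact: assoc_stable_dummy_null (stab k j).
Qed.

End IndividuallyRational.

End AssociatedInstance.

Theorem proposition29 (R : realFieldType) (n m : nat)
  (apref : 'I_n -> rel (option 'I_m)) (opref : 'I_m -> rel (option 'I_n))
  (p : 'M[R]_(n, m)) :
  (0 < n)%N -> (0 < m)%N ->
  general_instance apref opref ->
  gen_random_matching p ->
  fract_weakly_stable apref opref p <->
  (fws_assoc apref opref (assoc_matching p) /\ non_wasteful apref opref p).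
Proof.
move=> _ _ inst p_rm; split.
- case=> ir nw stab; split=> //; split; first exact: assoc_matching_bistochastic.
  exact: assoc_stable_of_fws.
- case=> [[_ stab] nw]; split=> //.
  + by apply/(individually_rational_own_pairsP inst p_rm); split=> *; apply: stab.
  + move=> i o ok; have := stab (inl i) (inl o).
    by rewrite (assoc_stable_acceptableE p inst ok).
Qed.
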